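(* Let $\chi$ and $\tau$ be fixed positive integers. For each $n$ let $G$ be an $n$-vertex graph and $\Sigma\subseteq V(G)$ with $|\Sigma|=n-o(n)$, such that for every pair of vertices $u,v\in\Sigma$ there is a $(u,v)$-path $u=u_0,u_1,\dots,u_{l-1},u_l=v$ with $l\le\chi$ and $\min\{\deg(u_i),\deg(u_{i+1})\}\le\tau$ for every $0\le i\le l-1$. If a uniformly random vertex of $G$ knows a rumor, then with probability $1-o(1)$ after $6\tau(\chi+\log n)$ rounds of the Push-Pull protocol at least $n-o(n)$ vertices know the rumor.
   Context: Push-Pull protocol: in synchronous rounds, every informed vertex contacts a uniformly random neighbor and sends it the rumor, and every uninformed vertex contacts a uniformly random neighbor and receives the rumor if that neighbor knows it; all random choices are independent, and a vertex informed in a round cannot forward the rumor in that same round. *)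

From HB Require Import structures.
From mathcomp Require Import all_boot all_order all_algebra.
From mathcomp Require Import all_classical all_reals all_analysis.
Set Implicit Arguments. Unset Strict Implicit. Unset Printing Implicit Defensive.
Import Order.TTheory GRing.Theory Num.Theory.
Local Open Scope ring_scope.

Section PushPull.
Variable R : realType.
Variable n : nat.
Variable e : rel 'I_n.

Definition deg (v : 'I_n) : nat := #|[set w | e v w]|.

Definition low_edge (tau : nat) : rel 'I_n :=
  fun a b => e a b && (minn (deg a) (deg b) <= tau)%N.

(* probability that in one round every vertex v contacts c v:
   each non-isolated vertex picks a uniformly random neighbour,
   independently; an isolated vertex contacts nobody (encoded c v = v). *)
Definition choice_weight (c : {ffun 'I_n -> 'I_n}) : R :=
  \prod_(v : 'I_n)
    (if deg v == 0%N then (c v == v)%:R else (e v (c v))%:R / (deg v)%:R).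

(* informed set after one round, given informed set S and contacts c:
   informed vertices push to their contact, uninformed vertices pull
   from their contact if it was informed at the start of the round. *)
Definition pp_step (S : {set 'I_n}) (c : {ffun 'I_n -> 'I_n}) : {set 'I_n} :=
  S :|: [set w | [exists v in S, c v == w]] :|: [set w | c w \in S].

Definition pp_trans (S S' : {set 'I_n}) : R :=
  \sum_(c : {ffun 'I_n -> 'I_n}) choice_weight c * (pp_step S c == S')%:R.

Definition pp_init : {ffun {set 'I_n} -> R} :=
  [ffun S => \sum_(v : 'I_n) (S == [set v])%:R / n%:R].

Fixpoint pp_dist (t : nat) : {ffun {set 'I_n} -> R} :=
  match t with
  | 0 => pp_init
  | t'.+1 => [ffun S' => \sum_(S : {set 'I_n}) pp_dist t' S * pp_trans S S']
  end.

Definition pp_prob (t : nat) (A : pred {set 'I_n}) : R :=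
  \sum_(S : {set 'I_n} | A S) pp_dist t S.

End PushPull.

From HB Require Import structures.
From mathcomp Require Import all_boot all_order all_algebra.
From mathcomp Require Import all_classical all_reals all_analysis.
From mathcomp Require Import ring lra zify.
Set Implicit Arguments. Unset Strict Implicit. Unset Printing Implicit Defensive.
Import Order.TTheory GRing.Theory Num.Theory.
Import numFieldNormedType.Exports.

Local Open Scope ring_scope.

(* Fix u, v in Sigma and a path u = v_0, ..., v_l = v of low edges with l <= chi,
   and let D be the number of path steps from the last informed v_i to v.  While
   D > 0, the endpoint of degree at most tau of the next path edge contacts the
   other endpoint with probability at least 1/tau, by a push or by a pull, so D
   drops by one.  Hence E[D_t] decreases by at least P[D_t > 0]/tau per round;
   as P[D_t > 0] is nonincreasing, after T rounds
   P[v uninformed] <= P[D_T > 0] <= chi tau / T.  Averaging over the random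
   start u and over v, the expected number of uninformed vertices is at most
   n eta with eta = chi tau / T + 2 |V - Sigma| / n, which tends to 0 because T
   grows like log n; Markov's inequality at threshold n sqrt(eta) concludes. *)

Lemma drift_bound (R : realType) (E Q : nat -> R) (p : R) :
  0 <= p -> (forall t, 0 <= E t) ->
  (forall t, E t.+1 <= E t - p * Q t) -> (forall t, Q t.+1 <= Q t) ->
  forall t, t%:R * p * Q t <= E 0%N.
Proof.
move=> p_ge0 E_ge0 E_drift Q_nonincr.
suff E_acc : forall t, E t + t%:R * p * Q t <= E 0%N.
  by move=> t; have := E_acc t; have := E_ge0 t; lra.
elim=> [|t IH]; first by rewrite mul0r mul0r addr0.
have Q_le : t.+1%:R * p * Q t.+1 <= t.+1%:R * p * Q t.
  by apply: ler_wpM2l => //; apply: mulr_ge0.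
by have := E_drift t; move: Q_le IH; rewrite -natr1; lra.
Qed.

Section Round.
Variables (R : realType) (n : nat) (e : rel 'I_n).

Definition contact_prob (x y : 'I_n) : R :=
  if deg e x == 0%N then (y == x)%:R else (e x y)%:R / (deg e x)%:R.

Lemma contact_prob_ge0 x y : 0 <= contact_prob x y.
Proof.
by rewrite /contact_prob; case: ifP => _; rewrite ?divr_ge0 ?ler0n.
Qed.

Lemma sum_adj x : \sum_y ((e x y)%:R : R) = (deg e x)%:R.
Proof.
rewrite /deg -sum1_card natr_sum [RHS]big_mkcond /=; apply: eq_bigr => y _.
by rewrite inE; case: (e x y).
Qed.

Lemma sum_contact_prob x : \sum_y contact_prob x y = 1.
Proof.
rewrite /contact_prob; case: eqP => [_ | dx].
  by rewrite (bigD1 x) //= eqxx big1 ?addr0 // => y /negbTE ->.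
by rewrite -mulr_suml sum_adj divff // pnatr_eq0; apply/eqP.
Qed.

Lemma choice_weightE c : choice_weight R e c = \prod_v contact_prob v (c v).
Proof. by []. Qed.

Lemma choice_weight_ge0 c : 0 <= choice_weight R e c.
Proof.
by rewrite choice_weightE; apply: prodr_ge0 => v _; apply: contact_prob_ge0.
Qed.

Lemma sum_choice_weight : \sum_c choice_weight R e c = 1.
Proof.
under eq_bigr do rewrite choice_weightE.
by rewrite -bigA_distr_bigA /= big1 // => v _; rewrite sum_contact_prob.
Qed.

Lemma choice_weight_marginal x y :
  \sum_c choice_weight R e c * (c x == y)%:R = contact_prob x y.
Proof.
pose F v j := contact_prob v j * (if v == x then (j == y)%:R else 1).
transitivity (\sum_(c : {ffun 'I_n -> 'I_n}) \prod_v F v (c v)).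
  apply: eq_bigr => c _; rewrite choice_weightE /F big_split /=; congr (_ * _).
  by rewrite (bigD1 x) //= eqxx big1 ?mulr1 // => v /negbTE ->.
rewrite -bigA_distr_bigA /= (bigD1 x) //= [X in _ * X]big1 ?mulr1; last first.
  move=> v /negbTE vx; rewrite /F vx.
  by under eq_bigr do rewrite mulr1; apply: sum_contact_prob.
rewrite /F eqxx (bigD1 y) //= eqxx mulr1 big1 ?addr0 // => j /negbTE ->.
by rewrite mulr0.
Qed.

Lemma pp_trans_expectation S (F : {set 'I_n} -> R) :
  \sum_S' pp_trans R e S S' * F S' =
  \sum_c choice_weight R e c * F (pp_step S c).
Proof.
under eq_bigr do rewrite /pp_trans mulr_suml.
rewrite exchange_big /=; apply: eq_bigr => c _.
rewrite (bigD1 (pp_step S c)) //= eqxx mulr1 big1 ?addr0 // => S' /negbTE.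
by rewrite eq_sym => ->; rewrite mulr0 mul0r.
Qed.

Lemma pp_trans_ge0 S S' : 0 <= pp_trans R e S S'.
Proof.
by apply: sumr_ge0 => c _; rewrite mulr_ge0 ?choice_weight_ge0 ?ler0n.
Qed.

Lemma sum_pp_trans S : \sum_S' pp_trans R e S S' = 1.
Proof.
under eq_bigr do rewrite -[pp_trans _ _ _ _]mulr1.
rewrite pp_trans_expectation.
by under eq_bigr do rewrite mulr1; apply: sum_choice_weight.
Qed.

Lemma pp_step_subset (S : {set 'I_n}) c : S \subset pp_step S c.
Proof. by apply/fintype.subsetP => x xS; rewrite /pp_step !inE xS. Qed.

Fixpoint pp_chain (mu : {ffun {set 'I_n} -> R}) t : {ffun {set 'I_n} -> R} :=
  if t is t'.+1 then [ffun S' => \sum_S pp_chain mu t' S * pp_trans R e S S']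
  else mu.

Lemma pp_chain_ge0 (mu : {ffun {set 'I_n} -> R}) :
  (forall S, 0 <= mu S) -> forall t S, 0 <= pp_chain mu t S.
Proof.
move=> mu0; elim=> //= t IH S; rewrite ffunE; apply: sumr_ge0 => S0 _.
by rewrite mulr_ge0 ?pp_trans_ge0.
Qed.

Lemma sum_pp_chain (mu : {ffun {set 'I_n} -> R}) t :
  \sum_S pp_chain mu t S = \sum_S mu S.
Proof.
elim: t => //= t IH; under eq_bigr do rewrite ffunE.
rewrite exchange_big /= -IH; apply: eq_bigr => S _.
by rewrite -mulr_sumr sum_pp_trans mulr1.
Qed.

Lemma pp_chain_expectation (mu : {ffun {set 'I_n} -> R}) t
    (F : {set 'I_n} -> R) :
  \sum_S' pp_chain mu t.+1 S' * F S' =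
  \sum_S pp_chain mu t S * \sum_c choice_weight R e c * F (pp_step S c).
Proof.
rewrite /=; under eq_bigr do rewrite ffunE mulr_suml.
rewrite exchange_big; apply: eq_bigr => S _.
rewrite -pp_trans_expectation mulr_sumr.
by apply: eq_bigr => S' _; rewrite mulrA.
Qed.

Lemma pp_chain_supp (u : 'I_n) (mu : {ffun {set 'I_n} -> R}) :
  (forall S : {set 'I_n}, u \notin S -> mu S = 0) ->
  forall t (S : {set 'I_n}), u \notin S -> pp_chain mu t S = 0.
Proof.
move=> mu0; elim=> //= t IH S' uS'; rewrite ffunE big1 // => S _.
have [uS | /IH -> ] := boolP (u \in S); last by rewrite mul0r.
rewrite /pp_trans big1 ?mulr0 // => c _.
suff /negbTE -> : pp_step S c != S' by rewrite mulr0.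
by apply: contraNneq uS' => <-; rewrite (fintype.subsetP (pp_step_subset S c)).
Qed.

Definition point_mass (u : 'I_n) : {ffun {set 'I_n} -> R} :=
  [ffun S => (S == [set u])%:R].

Lemma point_mass_ge0 u S : 0 <= point_mass u S.
Proof. by rewrite ffunE ler0n. Qed.

Lemma sum_point_mass u : \sum_S point_mass u S = 1.
Proof.
rewrite (bigD1 [set u]) //= ffunE eqxx big1 ?addr0 // => S /negbTE hS.
by rewrite ffunE hS.
Qed.

Lemma point_mass_supp (u : 'I_n) (S : {set 'I_n}) :
  u \notin S -> point_mass u S = 0.
Proof. by move=> uS; rewrite ffunE; case: eqP => // S1; rewrite S1 set11 in uS. Qed.

End Round.

Section PathSpread.
Variables (R : realType) (n : nat) (e : rel 'I_n).
Hypothesis e_sym : symmetric e.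
Variable tau : nat.
Hypothesis tau_gt0 : (0 < tau)%N.

Lemma contact_prob_edge a b : e a b -> (deg e a <= tau)%N ->
  (tau%:R : R)^-1 <= contact_prob R e a b.
Proof.
move=> eab da; have d0 : (0 < deg e a)%N by apply/card_gt0P; exists b; rewrite inE.
rewrite /contact_prob gtn_eqF // eab mul1r.
by rewrite lef_pV2 ?posrE ?ltr0n ?ler_nat ?tau_gt0.
Qed.

Lemma contact_prob_le_informed (S : {set 'I_n}) x y b :
  (forall c : {ffun 'I_n -> 'I_n}, c x = y -> b \in pp_step S c) ->
  contact_prob R e x y <= \sum_c choice_weight R e c * (b \in pp_step S c)%:R.
Proof.
move=> hb; rewrite -choice_weight_marginal; apply: ler_sum => c _.
apply: ler_wpM2l; first exact: choice_weight_ge0.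
by case: eqP => [/hb -> // | _]; rewrite ler0n.
Qed.

Lemma low_edge_informed_prob (S : {set 'I_n}) a b :
  a \in S -> low_edge e tau a b ->
  (tau%:R : R)^-1 <= \sum_c choice_weight R e c * (b \in pp_step S c)%:R.
Proof.
move=> aS /andP[eab]; rewrite geq_min => /orP[da | db].
  apply: le_trans (contact_prob_edge eab da) (contact_prob_le_informed _).
  move=> c cab; rewrite /pp_step !inE; apply/orP; left; apply/orP; right.
  by apply/existsP; exists a; rewrite aS cab eqxx.
have eba : e b a by rewrite e_sym.
apply: le_trans (contact_prob_edge eba db) (contact_prob_le_informed _).
by move=> c cba; rewrite /pp_step !inE cba aS orbT.
Qed.

Variables (u : 'I_n) (s : seq 'I_n).

Definition path_node i := nth u (u :: s) i.

Definition frontier (S : {set 'I_n}) : nat :=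
  \max_(i < (size s).+1 | path_node i \in S) i.

Definition remaining (S : {set 'I_n}) : nat := (size s - frontier S)%N.

Lemma frontier_le_size S : (frontier S <= size s)%N.
Proof. by apply/bigmax_leqP => i _; rewrite -ltnS. Qed.

Lemma frontier_mono (S S' : {set 'I_n}) :
  S \subset S' -> (frontier S <= frontier S')%N.
Proof.
move=> sub; apply/bigmax_leqP => i Si; apply: leq_bigmax_cond.
exact: (fintype.subsetP sub).
Qed.

Lemma path_node_frontier (S : {set 'I_n}) :
  u \in S -> path_node (frontier S) \in S.
Proof.
move=> uS.
have [|i Si max_i] := @eq_bigmax_cond _
  [pred i : 'I_(size s).+1 | path_node i \in S] (fun i => nat_of_ord i).
  by apply/card_gt0P; exists ord0; rewrite inE.
by rewrite /frontier max_i; rewrite inE in Si.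
Qed.

Lemma remaining_anti (S S' : {set 'I_n}) :
  S \subset S' -> (remaining S' <= remaining S)%N.
Proof. by move=> sub; rewrite /remaining leq_sub2l // frontier_mono. Qed.

Lemma remaining0_last (S : {set 'I_n}) :
  u \in S -> remaining S = 0%N -> last u s \in S.
Proof.
move=> uS /eqP; rewrite subn_eq0 => h.
have -> : last u s = path_node (size s).
  by rewrite /path_node (_ : size s = (size (u :: s)).-1) // nth_last.
have /eqP <- : frontier S == size s by rewrite eqn_leq h frontier_le_size.
exact: path_node_frontier.
Qed.

Lemma remaining_step (S : {set 'I_n}) c : (0 < remaining S)%N ->
  path_node (frontier S).+1 \in pp_step S c ->
  ((remaining (pp_step S c)).+1 <= remaining S)%N.
Proof.
move=> rem0 next_in.
have lt : ((frontier S).+1 < (size s).+1)%N by rewrite ltnS -subn_gt0.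
have next_le : ((frontier S).+1 <= frontier (pp_step S c))%N.
  exact: (@leq_bigmax_cond _ [pred i : 'I_(size s).+1 | path_node i \in pp_step S c]
    (fun i => nat_of_ord i) (Ordinal lt) next_in).
by have := frontier_le_size (pp_step S c); rewrite /remaining; lia.
Qed.

Lemma expected_remaining_step (S : {set 'I_n}) :
  u \in S -> path (low_edge e tau) u s ->
  \sum_c choice_weight R e c * (remaining (pp_step S c))%:R
    <= (remaining S)%:R - (tau%:R : R)^-1 * (0 < remaining S)%N%:R.
Proof.
move=> uS low_path; have [rem0 | rem_gt0] := posnP (remaining S).
  rewrite rem0 mulr0 subr0 big1 // => c _.
  have := remaining_anti (pp_step_subset S c).
  by rewrite rem0 leqn0 => /eqP ->; rewrite mulr0.
rewrite /= mulr1n mulr1.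
have lt : (frontier S < size s)%N by rewrite -subn_gt0.
set b := path_node (frontier S).+1.
have next_prob :=
  low_edge_informed_prob (path_node_frontier uS) (pathP u low_path _ lt).
apply: (@le_trans _ _ (\sum_c choice_weight R e c *
                        ((remaining S)%:R - (b \in pp_step S c)%:R))).
  apply: ler_sum => c _; apply: ler_wpM2l; first exact: choice_weight_ge0.
  have [b_in | _] := boolP (b \in pp_step S c).
    by have := remaining_step rem_gt0 b_in; rewrite -(ler_nat R) -natr1 /=; lra.
  by rewrite subr0 ler_nat remaining_anti // pp_step_subset.
under eq_bigr do rewrite mulrBr.
by rewrite sumrB -mulr_suml sum_choice_weight mul1r; lra.
Qed.

Lemma remaining_pos_nonincr (S : {set 'I_n}) :
  \sum_c choice_weight R e c * (0 < remaining (pp_step S c))%N%:R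
    <= ((0 < remaining S)%N%:R : R).
Proof.
have -> : ((0 < remaining S)%N%:R : R) =
    \sum_c choice_weight R e c * (0 < remaining S)%N%:R.
  by rewrite -mulr_suml sum_choice_weight mul1r.
apply: ler_sum => c _.
apply: ler_wpM2l; first exact: choice_weight_ge0.
rewrite ler_nat; case: (posnP (remaining (pp_step S c))) => [//|pos].
by rewrite (leq_trans pos (remaining_anti (pp_step_subset S c))).
Qed.

Lemma rounds_miss_le t : path (low_edge e tau) u s ->
  t%:R * (tau%:R : R)^-1 *
    \sum_S pp_chain e (point_mass R u) t S * (last u s \notin S)%:R
  <= (size s)%:R.
Proof.
move=> low_path.
pose chain := pp_chain e (point_mass R u).
have chain_ge0 : forall t S, 0 <= chain t S :=
  pp_chain_ge0 e (point_mass_ge0 R u).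
have chain_supp : forall t (S : {set 'I_n}), u \notin S -> chain t S = 0 :=
  pp_chain_supp e (@point_mass_supp R n u).
pose E t := \sum_S chain t S * (remaining S)%:R.
pose Q t := \sum_S chain t S * (0 < remaining S)%N%:R.
have tau_inv_ge0 : 0 <= (tau%:R : R)^-1 by rewrite invr_ge0 ler0n.
have E0 : E 0%N <= (size s)%:R.
  have -> : ((size s)%:R : R) = \sum_S point_mass R u S * (size s)%:R.
    by rewrite -mulr_suml sum_point_mass mul1r.
  by apply: ler_sum => S _; rewrite ler_wpM2l ?point_mass_ge0 // ler_nat leq_subr.
have miss_le_Q : \sum_S chain t S * (last u s \notin S)%:R <= Q t.
  apply: ler_sum => S _; have [uS | uS] := boolP (u \in S); last first.
    by rewrite /chain chain_supp // !mul0r.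
  apply: ler_wpM2l => //; rewrite ler_nat.
  by case: (posnP (remaining S)) => [/(remaining0_last uS) -> | _]; rewrite ?leq_b1.
have Q_nonincr k : Q k.+1 <= Q k.
  rewrite /Q pp_chain_expectation; apply: ler_sum => S _.
  by apply: ler_wpM2l => //; apply: remaining_pos_nonincr.
have E_drift k : E k.+1 <= E k - tau%:R^-1 * Q k.
  rewrite /E /Q pp_chain_expectation mulr_sumr -sumrB; apply: ler_sum => S _.
  rewrite mulrCA -mulrBr; have [uS | uS] := boolP (u \in S); last first.
    by rewrite /chain chain_supp // !mul0r.
  by apply: ler_wpM2l => //; apply: expected_remaining_step.
have E_ge0 k : 0 <= E k by apply: sumr_ge0 => S _; rewrite mulr_ge0.
apply: le_trans E0.
apply: le_trans (drift_bound tau_inv_ge0 E_ge0 E_drift Q_nonincr t).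
by apply: ler_wpM2l => //; rewrite mulr_ge0.
Qed.

End PathSpread.

Section Spread.
Variables (R : realType) (n : nat) (e : rel 'I_n).

Lemma pp_dist_avg t S :
  pp_dist R e t S = n%:R^-1 * \sum_u pp_chain e (point_mass R u) t S.
Proof.
elim: t S => [|t IH] S.
  by rewrite /= ffunE mulr_sumr; apply: eq_bigr => v _; rewrite ffunE mulrC.
rewrite /= ffunE; under eq_bigr do rewrite IH -mulrA mulr_suml.
rewrite -mulr_sumr exchange_big /=; congr (_ * _); apply: eq_bigr => u _.
by rewrite ffunE.
Qed.

Lemma pp_dist_ge0 t S : 0 <= pp_dist R e t S.
Proof.
rewrite pp_dist_avg mulr_ge0 ?invr_ge0 ?ler0n //.
by apply: sumr_ge0 => u _; apply: pp_chain_ge0; apply: point_mass_ge0.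
Qed.

Lemma sum_pp_dist t : (0 < n)%N -> \sum_S pp_dist R e t S = 1.
Proof.
move=> n_gt0; under eq_bigr do rewrite pp_dist_avg.
rewrite -mulr_sumr exchange_big /=.
under eq_bigr do rewrite sum_pp_chain sum_point_mass.
by rewrite sumr_const card_ord mulVf // pnatr_eq0 -lt0n.
Qed.

Lemma pp_prob_le1 t (A : pred {set 'I_n}) :
  (0 < n)%N -> pp_prob R e t A <= 1.
Proof.
move=> n_gt0; rewrite -(sum_pp_dist t n_gt0) [X in _ <= X](bigID A) /= lerDl.
by apply: sumr_ge0 => S _; apply: pp_dist_ge0.
Qed.

Lemma pp_prob_markov t g : (0 < n)%N ->
  1 - (\sum_S pp_dist R e t S * (n - #|S|)%N%:R) / g.+1%:R
    <= pp_prob R e t (fun S => (n - g <= #|S|)%N).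
Proof.
move=> n_gt0; set good := fun S : {set 'I_n} => (n - g <= #|S|)%N.
have mass : pp_prob R e t good + \sum_(S | ~~ good S) pp_dist R e t S = 1.
  by rewrite -(sum_pp_dist t n_gt0) [RHS](bigID good).
have bad_le : (\sum_(S | ~~ good S) pp_dist R e t S) * g.+1%:R
    <= \sum_S pp_dist R e t S * (n - #|S|)%N%:R.
  rewrite mulr_suml [X in _ <= X](bigID good) /= ler_wpDl //.
    by apply: sumr_ge0 => S _; rewrite mulr_ge0 ?pp_dist_ge0 ?ler0n.
  apply: ler_sum => S bad_S; apply: ler_wpM2l; first exact: pp_dist_ge0.
  by move: bad_S; rewrite ler_nat /good -ltnNge ltn_subRL addnC -ltn_subRL.
rewrite -ler_pdivlMr ?ltr0n // in bad_le.
have -> : pp_prob R e t good = 1 - \sum_(S | ~~ good S) pp_dist R e t S.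
  by rewrite -mass addrK.
by rewrite lerD2l lerN2.
Qed.

Lemma sum_notin (S : {set 'I_n}) :
  \sum_v ((v \notin S)%:R : R) = (n - #|S|)%N%:R.
Proof.
have -> : (n - #|S| = #|~: S|)%N.
  by rewrite -[n in (n - _)%N]card_ord -(cardsC S) addKn.
rewrite -sum1_card natr_sum [RHS]big_mkcond /=.
by apply: eq_bigr => v _; rewrite !inE; case: (v \in S).
Qed.

Lemma pp_prob_sqrt_threshold t (eta : R) : (0 < n)%N -> 0 <= eta ->
  \sum_S pp_dist R e t S * (n - #|S|)%N%:R <= n%:R * eta ->
  1 - Num.sqrt eta <=
    pp_prob R e t (fun S => (n - Num.truncn (n%:R * Num.sqrt eta) <= #|S|)%N).
Proof.
move=> n_gt0 eta_ge0 E_le; apply: le_trans (pp_prob_markov t _ n_gt0).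
rewrite lerD2l lerN2 ler_pdivrMr ?ltr0n //; apply: le_trans E_le _.
rewrite -{1}(sqr_sqrtr eta_ge0) expr2 mulrA [X in _ <= X]mulrC.
by apply: ler_wpM2r; [exact: sqrtr_ge0 | exact/ltW/truncnS_gt].
Qed.

Hypothesis e_sym : symmetric e.
Variables (chi tau : nat) (Sigma : {set 'I_n}).
Hypothesis tau_gt0 : (0 < tau)%N.
Hypothesis Sigma_low_paths : forall u v : 'I_n, u \in Sigma -> v \in Sigma ->
  exists s : seq 'I_n,
    [/\ path (low_edge e tau) u s, last u s = v & (size s <= chi)%N].

Lemma miss_prob_le t (u v : 'I_n) : (0 < t)%N ->
  \sum_S pp_chain e (point_mass R u) t S * (v \notin S)%:R <=
  chi%:R * tau%:R / t%:R + (u \notin Sigma)%:R + (v \notin Sigma)%:R.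
Proof.
move=> t_gt0; set P := \sum_S _.
have chain_ge0 := pp_chain_ge0 e (point_mass_ge0 R u) t.
have P_ge0 : 0 <= P by apply: sumr_ge0 => S _; rewrite mulr_ge0.
have P_le1 : P <= 1.
  rewrite -(sum_point_mass R u) -(sum_pp_chain e _ t); apply: ler_sum => S _.
  by rewrite ler_piMr // lern1 leq_b1.
have K_ge0 : 0 <= chi%:R * tau%:R / t%:R :> R by rewrite divr_ge0 ?mulr_ge0.
have [uS | uS] := boolP (u \in Sigma); last first.
  by move: (ler0n R (v \notin Sigma)); rewrite /= mulr1n; lra.
have [vS | vS] := boolP (v \in Sigma); last first.
  by move: (ler0n R (u \notin Sigma)); rewrite /= mulr1n; lra.
rewrite /= !mulr0n !addr0.
have [s [low_path last_s s_le]] := Sigma_low_paths uS vS.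
have := rounds_miss_le R e_sym tau_gt0 t low_path; rewrite last_s -/P => miss_le.
have t_neq0 : (t%:R : R) != 0 by rewrite pnatr_eq0 -lt0n.
have tau_neq0 : (tau%:R : R) != 0 by rewrite pnatr_eq0 -lt0n.
clearbody P; have -> : P = t%:R * tau%:R^-1 * P * (tau%:R / t%:R).
  by field; rewrite ?t_neq0 ?tau_neq0.
rewrite -[chi%:R * _ / _]mulrA; apply: ler_wpM2r; first by rewrite divr_ge0.
by rewrite (le_trans miss_le) ?ler_nat.
Qed.

Lemma expected_missing_le t : (0 < n)%N -> (0 < t)%N ->
  \sum_S pp_dist R e t S * (n - #|S|)%N%:R <=
  n%:R * (chi%:R * tau%:R / t%:R + 2 * ((n - #|Sigma|)%N%:R / n%:R)).
Proof.
move=> n_gt0 t_gt0.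
set K := chi%:R * tau%:R / t%:R; set m := ((n - #|Sigma|)%N%:R : R).
have n_neq0 : (n%:R : R) != 0 by rewrite pnatr_eq0 -lt0n.
under eq_bigr do rewrite -sum_notin mulr_sumr.
rewrite exchange_big /=.
under eq_bigr do under eq_bigr do rewrite pp_dist_avg -mulrA mulr_suml.
under eq_bigr do rewrite -mulr_sumr exchange_big /=.
rewrite -mulr_sumr.
apply: (@le_trans _ _ (n%:R^-1 * \sum_(v : 'I_n) \sum_(u : 'I_n)
                        (K + (u \notin Sigma)%:R + (v \notin Sigma)%:R))).
  rewrite ler_wpM2l ?invr_ge0 ?ler0n //.
  by apply: ler_sum => v _; apply: ler_sum => u _; apply: miss_prob_le.
under eq_bigr do rewrite !big_split /= !sumr_const card_ord sum_notin -/m.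
rewrite !big_split /= !sumr_const card_ord sumrMnl sum_notin -/m.
rewrite -!mulrnDl -[(_ + m + m) *+ n]mulr_natr mulrCA mulVf // mulr1 mulrDr.
rewrite [n%:R * (2 * _)]mulrCA [n%:R * (m / _)]mulrCA divff // mulr1.
by rewrite -[K *+ n]mulr_natl; lra.
Qed.

End Spread.

Lemma truncn_mul_div_le (R : realType) n (x : R) : (0 < n)%N -> 0 <= x ->
  (Num.truncn (n%:R * x))%:R / n%:R <= x.
Proof.
move=> n_gt0 x_ge0; rewrite ler_pdivrMr ?ltr0n // [x * _]mulrC.
by have /andP[] := truncn_itv (mulr_ge0 (ler0n R n) x_ge0).
Qed.

Definition pp_rounds (R : realType) (chi tau n : nat) : nat :=
  Num.truncn (6 * tau%:R * (chi%:R + ln (n%:R : R)) : R).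

Local Open Scope classical_set_scope.

Section Rounds.
Variables (R : realType) (chi tau : nat).
Hypotheses (chi_gt0 : (0 < chi)%N) (tau_gt0 : (0 < tau)%N).

Lemma pp_rounds_ge n :
  (0 < n)%N -> ln (n%:R : R) + 1 <= (pp_rounds R chi tau n)%:R.
Proof.
move=> n_gt0; have ln_ge0 : 0 <= ln (n%:R : R) by rewrite ln_ge0 // ler1n.
have := truncnS_gt (6 * tau%:R * (chi%:R + ln (n%:R : R)) : R).
rewrite -/(pp_rounds R chi tau n) -natr1.
have tau_ge1 : 1 <= (tau%:R : R) by rewrite ler1n.
have chi_ge1 : 1 <= (chi%:R : R) by rewrite ler1n.
have : 1 <= (tau%:R : R) * chi%:R by rewrite -natrM ler1n muln_gt0 tau_gt0.
have : ln (n%:R : R) <= tau%:R * ln (n%:R : R) by rewrite ler_peMl.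
by rewrite mulrDr; lra.
Qed.

Lemma pp_rounds_gt0 n : (0 < n)%N -> (0 < pp_rounds R chi tau n)%N.
Proof.
move=> n_gt0; have ln_ge0 : 0 <= ln (n%:R : R) by rewrite ln_ge0 // ler1n.
by have := pp_rounds_ge n_gt0; rewrite -(ltr0n R); lra.
Qed.

Lemma cvg_div_pp_rounds (c : R) : 0 <= c ->
  c / (pp_rounds R chi tau n)%:R @[n --> \oo] --> 0.
Proof.
move=> c_ge0; apply/cvgrPdist_le => eps eps_gt0.
exists (Num.truncn (expR (c / eps))).+1 => // n /= n_large.
have n_gt0 : (0 < n)%N by apply: leq_trans n_large.
have T_ge := pp_rounds_ge n_gt0.
have ln_ge0 : 0 <= ln (n%:R : R) by rewrite ln_ge0 // ler1n.
have c_le : c <= ln (n%:R : R) * eps.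
  rewrite -ler_pdivrMr // -[X in X <= _]expRK ler_ln ?posrE ?expR_gt0 ?ltr0n //.
  by apply/ltW/(lt_le_trans (truncnS_gt _)); rewrite ler_nat.
rewrite sub0r normrN ger0_norm ?divr_ge0 // ler_pdivrMr ?ltr0n; last first.
  by rewrite -(ltr0n R); lra.
by rewrite mulrC (le_trans c_le) // ler_pM2r //; lra.
Qed.

End Rounds.

Theorem lemma2 (R : realType) (chi tau : nat)
  (e : forall n : nat, rel 'I_n) (Sigma : forall n : nat, {set 'I_n}) :
  (0 < chi)%N -> (0 < tau)%N ->
  (forall n, symmetric (e n) /\ irreflexive (e n)) ->
  (((n - #|Sigma n|)%N%:R / n%:R : R) @[n --> \oo] --> 0) ->
  (forall n (u v : 'I_n), u \in Sigma n -> v \in Sigma n ->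
     exists s : seq 'I_n,
       [/\ path (low_edge (e n) tau) u s, last u s = v & (size s <= chi)%N]) ->
  exists g : nat -> nat,
    (((g n)%:R / n%:R : R) @[n --> \oo] --> 0) /\
    ((pp_prob R (e n)
          (Num.truncn (6 * tau%:R * (chi%:R + ln (n%:R : R)) : R))
          (fun S => (n - g n <= #|S|)%N)) @[n --> \oo] --> (1 : R)).
Proof.
move=> chi_gt0 tau_gt0 e_graph Sigma_dense low_paths.
pose eta n : R := chi%:R * tau%:R / (pp_rounds R chi tau n)%:R +
                  2 * ((n - #|Sigma n|)%N%:R / n%:R).
have eta_ge0 n : 0 <= eta n by rewrite addr_ge0 ?mulr_ge0 ?divr_ge0.
have sqrt_eta_cvg0 : Num.sqrt (eta n) @[n --> \oo] --> 0.
  rewrite -sqrtr0; apply: continuous_cvg; first exact: sqrt_continuous.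
  rewrite -[0](addr0 0) -[X in _ + X](mulr0 2).
  apply: cvgD; first exact: cvg_div_pp_rounds.
  exact: cvgM (cvg_cst _) Sigma_dense.
exists (fun n => Num.truncn (n%:R * Num.sqrt (eta n))); split.
  apply: (squeeze_cvgr _ (cvg_cst 0) sqrt_eta_cvg0).
  exists 1%N => // n /= n_gt0.
  by rewrite divr_ge0 ?truncn_mul_div_le ?sqrtr_ge0.
have one_sub_cvg1 : 1 - Num.sqrt (eta n) @[n --> \oo] --> (1 : R).
  by rewrite -[X in _ --> X]subr0; apply: cvgB (cvg_cst _) sqrt_eta_cvg0.
apply: (squeeze_cvgr _ one_sub_cvg1); last exact: cvg_cst.
exists 1%N => // n /= n_gt0; have [e_sym _] := e_graph n.
rewrite pp_prob_le1 // andbT pp_prob_sqrt_threshold //.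
apply: (expected_missing_le R e_sym tau_gt0 (low_paths n) n_gt0).
exact: pp_rounds_gt0.
Qed.
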